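(* Let $T$ be a supercritical Galton–Watson tree with finite alphabet $\mathbb{A}$. Let $(\mathscr{A}_k)_{k\in\mathbb{N}}$ be such that each $\mathscr{A}_k$ is a nonempty collection of nonempty subsets of $\mathbb{A}^k$, and define $g_{\mathscr{A}_k}(s)=\mathbb{P}(T_k^{(s)}\notin\overline{\mathscr{A}_k})$ for $s\in[0,1]$. Assume that $g_{\mathscr{A}_k}(s)\to\mathbb{P}(\text{extinction})$ as $k\to\infty$ for every $s\in(0,1)$. Then there is $K\in\mathbb{N}$ such that for every $k>K$, almost surely conditioned on nonextinction, there exist infinitely many vertices $v\in T_{(k)}$ such that the descendants tree $(T_{(k)})^v$ has an $\mathscr{A}_k$-subtree.
   Context: Trees with alphabet $\mathbb{B}$ are prefix-closed subsets of $\mathbb{B}^*$ containing the empty word; $W_S(a)=\{i\in\mathbb{B}:ai\in S\}$; $S^v=\{j:vj\in S\}$; an $\mathscr{A}$-subtree of $S$ is a tree $S'\subseteq S$ with $W_{S'}(a)\in\mathscr{A}$ for all $a\in S'$. The Galton–Watson tree with offspring distribution $W$ (random subset of $\mathbb{A}$ with $\mathbb{P}(i\in W)>0$ for all $i$) is $T_0=\{\emptyset\}$, $T_n=\{aj:a\in T_{n-1},j\in W_a\}$ with independent copies $W_a$; supercritical means $\mathbb{E}|W|>1$; extinction means some $T_n=\emptyset$. The $k$-compressed tree is $T_{(k)}=\bigcup_{n\ge0}T_{kn}$, viewed as a tree with alphabet $\mathbb{A}^k$ (identifying $\mathbb{A}^{kn}$ with $(\mathbb{A}^k)^n$). $\overline{\mathscr{A}}=\{S:\exists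 X\in\mathscr{A},X\subseteq S\}$. $T_k^{(s)}=T_k\cap Y$ with $Y\subseteq\mathbb{A}^k$ independent, $\mathbb{P}(Y=B)=(1-s)^{|B|}s^{|\mathbb{A}^k\setminus B|}$. *)

From HB Require Import structures.
From mathcomp Require Import all_boot all_order all_algebra.
From mathcomp Require Import all_classical all_reals all_analysis.
Set Implicit Arguments. Unset Strict Implicit. Unset Printing Implicit Defensive.
Import Order.TTheory GRing.Theory Num.Theory.
Local Open Scope classical_set_scope.
Local Open Scope ring_scope.

Section GW.
Variable A : finType.

(** Membership of a word in the Galton-Watson tree determined by the
    offspring sets W : A^* -> {set A}: a = a1...an is in T_n iff
    a_{i+1} \in W_{a1...ai} for all i < n (unfolding T_n = {aj : a in T_{n-1}, j in W_a}). *)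
Fixpoint inGW_from (W : seq A -> {set A}) (p a : seq A) : bool :=
  match a with
  | [::] => true
  | j :: a' => (j \in W p) && inGW_from W (rcons p j) a'
  end.

Definition inGW (W : seq A -> {set A}) (a : seq A) : bool := inGW_from W [::] a.

Definition extinct (W : seq A -> {set A}) : Prop :=
  exists n : nat, forall a : seq A, size a = n -> ~~ inGW W a.

Definition Tgen (W : seq A -> {set A}) (k : nat) : {set k.-tuple A} :=
  [set t : k.-tuple A | inGW W (val t)].

Definition Tcomp (W : seq A -> {set A}) (k : nat) : pred (seq (k.-tuple A)) :=
  fun b => inGW W (flatten (map val b)).
End GW.

Section Trees.
Variable B : finType.

Definition is_tree (S : pred (seq B)) : Prop :=
  S [::] /\ forall (a : seq B) (j : B), S (rcons a j) -> S a.

Definition Wof (S : pred (seq B)) (a : seq B) : {set B} := [set i | S (rcons a i)].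

Definition desc (S : pred (seq B)) (v : seq B) : pred (seq B) := fun j => S (v ++ j).

Definition has_subtree (Aset : {set {set B}}) (S : pred (seq B)) : Prop :=
  exists S' : pred (seq B), is_tree S' /\ (forall a, S' a -> S a) /\
    (forall a, S' a -> Wof S' a \in Aset).

Definition upclosure_mem (Aset : {set {set B}}) (S : {set B}) : bool :=
  [exists X in Aset, X \subset S].
End Trees.

Definition Pr (R : realType) (d : measure_display) (Omega : measurableType d)
  (P : probability Omega R) (E : set Omega) : R := fine (P E).

(** g_{A_k}(s) = P(T_k^{(s)} \notin overline(A_k)), where T_k^{(s)} = T_k \cap Y with Y
    independent of the tree and P(Y = B) = (1-s)^|B| s^|A^k \ B|; by independence of Y
    this is written as the sum over the values B of Y. *)
Definition gfun (R : realType) (d : measure_display) (Omega : measurableType d)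
  (P : probability Omega R) (A : finType) (W : seq A -> Omega -> {set A})
  (k : nat) (Ak : {set {set k.-tuple A}}) (s : R) : R :=
  \sum_(B : {set k.-tuple A})
     (1 - s) ^+ #|B| * s ^+ #|~: B| *
     Pr P [set w | ~~ upclosure_mem Ak (Tgen (fun a => W a w) k :&: B)].

From HB Require Import structures.
From mathcomp Require Import all_boot all_order all_algebra.
From mathcomp Require Import all_classical all_reals all_analysis.
From mathcomp Require Import ring lra.
Import Order.TTheory GRing.Theory Num.Theory numFieldNormedType.Exports.
Local Open Scope classical_set_scope.
Local Open Scope ring_scope.
Set Implicit Arguments. Unset Strict Implicit. Unset Printing Implicit Defensive.

(* Write q for the extinction probability and x_n for the probability that the
   k-compressed tree has no A_k-subtree of height n, so x_0 = 0.  The vertices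
   of generation k carrying an A_k-subtree of height n depend only on deeper
   offspring sets: they form a random subset of A^k, independent of T_k, that
   contains each vertex independently with probability 1 - x_n.  Hence
   x_(n+1) = g_(A_k)(x_n), and since g_(A_k) is nondecreasing, every x_n is at
   most s as soon as g_(A_k)(s) <= s.  For s in (q, 1) this holds for all large k.
   The same independence bounds the probability that generation kL is nonempty
   while none of its vertices carries a subtree of height n by
   E[s^|T_kL|] - P(T_kL empty) <= g_(A_kL)(s) - P(T_kL empty), which tends to q - q = 0
   as L grows.  Finally, by compactness (A_k is finite) a vertex carrying
   subtrees of every height carries an A_k-subtree; so on nonextinction with
   only finitely many such vertices, the event above occurs for every large L. *)

Lemma ex_monotone_all_seq (T : eqType) (Q : nat -> T -> bool) (r : seq T) :
  (forall n m x, (n <= m)%N -> Q n x -> Q m x) ->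
  (forall x, x \in r -> exists n, Q n x) -> exists n, forall x, x \in r -> Q n x.
Proof.
move=> Qmono; elim: r => [|x r IH] Qr; first by exists 0%N.
have [n Qx] := Qr x (mem_head _ _).
have [m Qm] : exists m, forall y, y \in r -> Q m y.
  by apply: IH => y yr; apply: Qr; rewrite inE yr orbT.
exists (maxn n m) => y; rewrite inE => /predU1P[->|yr].
  by apply: Qmono Qx; rewrite leq_maxl.
by apply: Qmono (Qm y yr); rewrite leq_maxr.
Qed.

Lemma finite_set_size_bound (T : choiceType) (X : set (seq T)) :
  finite_set X -> exists m, forall v, X v -> (size v < m)%N.
Proof.
case/finite_seqP => r ->; exists (\max_(v <- r) size v).+1 => v /= vr.
by rewrite ltnS (big_rem v vr) /= leq_maxl.
Qed.

Lemma upclosure_memS (B : finType) (Aset : {set {set B}}) (S S' : {set B}) :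
  S \subset S' -> upclosure_mem Aset S -> upclosure_mem Aset S'.
Proof.
move=> SS' /exists_inP[X XA XS]; apply/exists_inP; exists X => //.
exact: fintype.subset_trans XS SS'.
Qed.

Definition short_words {A : finType} N : seq (seq A) :=
  undup (flatten [seq [seq val t | t : i.-tuple A] | i <- iota 0 N]).

Lemma short_words_uniq {A : finType} N : uniq (@short_words A N).
Proof. exact: undup_uniq. Qed.

Lemma mem_short_words (A : finType) N (c : seq A) : (c \in short_words N) = (size c < N)%N.
Proof.
rewrite mem_undup; apply/flattenP/idP => [[s /mapP[i]]|cN].
  by rewrite mem_iota => /andP[_ iN] -> /mapP[t _ ->]; rewrite size_tuple.
exists [seq val t | t : (size c).-tuple A]; first by apply/map_f; rewrite mem_iota.
by apply/mapP; exists (in_tuple c); rewrite ?mem_enum.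
Qed.

Section Words.
Variable A : finType.
Implicit Types (f g : seq A -> {set A}) (p a t : seq A).

Lemma inGW_from_cat f p x y :
  inGW_from f p (x ++ y) = inGW_from f p x && inGW_from f (p ++ x) y.
Proof.
elim: x p => [|j x IH] p /=; first by rewrite cats0.
by rewrite IH andbA cat_rcons.
Qed.

Lemma inGW_from_catl f a p t :
  inGW_from f (a ++ p) t = inGW_from (fun c => f (a ++ c)) p t.
Proof. by elim: t p => [|j t IH] p //=; rewrite rcons_cat IH. Qed.

Lemma eq_inGW_from f g p t :
  (forall c, (size c < size t)%N -> f (p ++ c) = g (p ++ c)) ->
  inGW_from f p t = inGW_from g p t.
Proof.
elim: t p => [|j t IH] p //= fg.
have := fg [::] isT; rewrite cats0 => ->; congr (_ && _).
by apply: IH => c ct; rewrite -cats1 -catA fg //= size_cat addn1 ltnS.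
Qed.

Lemma inGW_take f a n : inGW f a -> inGW f (take n a).
Proof. by rewrite /inGW -{1}(cat_take_drop n a) inGW_from_cat => /andP[]. Qed.

Lemma Tgen_eq0P f n : reflect (forall a, size a = n -> ~~ inGW f a) (Tgen f n == finset.set0).
Proof.
apply: (iffP eqP) => [/setP T0 a an | T0].
  have an' : size a == n by apply/eqP.
  by have := T0 (Tuple an'); rewrite !inE /= => ->.
by apply/setP => t; rewrite !inE; apply/negbTE/T0; exact: size_tuple.
Qed.

Lemma extinctE f : extinct f <-> exists n, Tgen f n == finset.set0.
Proof. by split=> -[n /Tgen_eq0P]; exists n. Qed.

Lemma Tgen_eq0_le f n m : (n <= m)%N ->
  Tgen f n == finset.set0 -> Tgen f m == finset.set0.
Proof.
move=> nm /Tgen_eq0P Tn; apply/Tgen_eq0P => a am; apply: contraTN (Tn (take n a) _).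
  by move/inGW_take; rewrite negbK.
by rewrite size_take am; case: ltngtP nm.
Qed.

Lemma unflatten_tuples k L a : size a = (k * L)%N ->
  exists v : seq (k.-tuple A), size v = L /\ flatten (map val v) = a.
Proof.
elim: L a => [|L IH] a aL; first by exists [::]; move: aL; rewrite muln0 => /size0nil ->.
have tk : size (take k a) == k by rewrite size_takel // aL mulnS leq_addr.
have [v [vL va]] : exists v : seq (k.-tuple A), size v = L /\ flatten (map val v) = drop k a.
  by apply: IH; rewrite size_drop aL mulnS addKn.
by exists (Tuple tk :: v); rewrite /= vL va cat_take_drop.
Qed.

Variables (k : nat) (Ak : {set {set k.-tuple A}}).

(* [tall f n a]: the k-compressed tree hanging at the word [a] contains an
   [Ak]-subtree of height [n]. *)
Fixpoint tall f n a : bool :=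
  if n is n'.+1 then
    [exists X in Ak, [forall t in X, inGW_from f a (val t) && tall f n' (a ++ val t)]]
  else true.

Lemma tall_le f n m a : (n <= m)%N -> tall f m a -> tall f n a.
Proof.
elim: n m a => [|n IH] [|m] a //= nm /existsP[X /andP[XA /forall_inP tX]].
apply/existsP; exists X; rewrite XA; apply/forall_inP => t /tX /andP[-> /=].
exact: IH.
Qed.

Lemma eq_tall f g n a :
  (forall c, (size c < n * k)%N -> f (a ++ c) = g (a ++ c)) -> tall f n a = tall g n a.
Proof.
elim: n a => [|n IH] a //= fg.
apply: eq_existsb => X; congr (_ && _); apply: eq_forallb => t.
congr (_ ==> (_ && _)).
  apply: eq_inGW_from => c ct; apply: fg.
  by apply: leq_trans ct _; rewrite size_tuple mulSn leq_addr.
apply: IH => c ct; rewrite -catA fg //.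
by rewrite size_cat size_tuple mulSn ltn_add2l.
Qed.

Lemma tall_catl f n a : tall f n a = tall (fun c => f (a ++ c)) n [::].
Proof.
elim: n f a => [|n IH] f a //=.
apply: eq_existsb => X; congr (_ && _); apply: eq_forallb => t.
rewrite -inGW_from_catl cats0; congr (_ ==> (_ && _)).
by rewrite IH [RHS]IH; congr tall; apply: funext => c /=; rewrite catA.
Qed.

Definition infinitely_tall f a := forall n, tall f n a.

Lemma infinitely_tall_step f a : infinitely_tall f a ->
  exists2 X, X \in Ak & forall t : k.-tuple A, t \in X ->
    inGW_from f a (val t) /\ infinitely_tall f (a ++ val t).
Proof.
move=> Ta.
(* As [Ak] is finite, a single [X] must serve for all heights. *)
pose Q n X := (X \in Ak) && [forall t in X, inGW_from f a (val t) && tall f n (a ++ val t)].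
apply: contrapT => noX.
have [N QN] : exists N, forall X, X \in index_enum {set k.-tuple A} -> ~~ Q N X.
  apply: ex_monotone_all_seq => [n m X nm|X _].
    rewrite /Q; apply: contra => /andP[-> /forall_inP tX]; apply/forall_inP => t /tX /andP[-> /=].
    exact: tall_le.
  apply: contrapT => /forallNP QX; apply: noX.
  have {}QX n : Q n X by apply/negPn/negP/QX.
  exists X; first by case/andP: (QX 0%N).
  move=> t tX; split; first by case/andP: (QX 0%N) => _ /forall_inP/(_ t tX)/andP[].
  by move=> n; case/andP: (QX n) => _ /forall_inP/(_ t tX)/andP[].
by have /existsP[X XQ] := Ta N.+1; have := QN X (mem_index_enum X); rewrite /Q XQ.
Qed.

Fixpoint follows (Xc : seq A -> {set k.-tuple A}) p (b : seq (k.-tuple A)) : bool :=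
  if b is t :: b' then (t \in Xc p) && follows Xc (p ++ val t) b' else true.

Lemma follows_rcons Xc p (b : seq (k.-tuple A)) (t : k.-tuple A) :
  follows Xc p (rcons b t) = follows Xc p b && (t \in Xc (p ++ flatten (map val b))).
Proof.
elim: b p => [|u b IH] p /=; first by rewrite cats0 andbT.
by rewrite IH andbA catA.
Qed.

Lemma infinitely_tall_has_subtree f a : infinitely_tall f a ->
  has_subtree Ak (fun b : seq (k.-tuple A) => inGW_from f a (flatten (map val b))).
Proof.
move=> Ta.
have step p : exists X : {set k.-tuple A}, infinitely_tall f p ->
    X \in Ak /\ forall t : k.-tuple A, t \in X ->
      inGW_from f p (val t) /\ infinitely_tall f (p ++ val t).
  have [/infinitely_tall_step[X XA tX]|nTp] := pselect (infinitely_tall f p).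
    by exists X.
  by exists finset.set0 => /nTp.
have [Xc HXc] := choice step.
have followsP (b : seq (k.-tuple A)) p : infinitely_tall f p -> follows Xc p b ->
    inGW_from f p (flatten (map val b)) /\ infinitely_tall f (p ++ flatten (map val b)).
  elim: b p => [|t b IH] p Tp /=; first by rewrite cats0.
  case/andP=> /(proj2 (HXc p Tp))[tp Tpt] /(IH _ Tpt)[bp Tpb].
  by rewrite inGW_from_cat tp bp catA.
exists (follows Xc a); split; first by split=> // b t; rewrite follows_rcons => /andP[].
split=> b fb; have [ba Tab] := followsP b a Ta fb; first exact: ba.
rewrite /Wof (_ : [set i | _]%SET = Xc (a ++ flatten (map val b))); first exact: (HXc _ Tab).1.
by apply/setP => t; rewrite inE follows_rcons fb.
Qed.

Lemma desc_Tcomp f (v b : seq (k.-tuple A)) :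
  desc (@Tcomp A f k) v b = Tcomp f v && inGW_from f (flatten (map val v)) (flatten (map val b)).
Proof. by rewrite /desc /Tcomp /inGW map_cat flatten_cat inGW_from_cat. Qed.

Lemma infinitely_tall_vertex f L (t : (k * L).-tuple A) :
  t \in Tgen f (k * L) -> infinitely_tall f (val t) ->
  exists2 v : seq (k.-tuple A), size v = L &
    Tcomp f v /\ has_subtree Ak (desc (@Tcomp A f k) v).
Proof.
move=> tT Tt; have [v [vL vt]] := unflatten_tuples (size_tuple t).
have Tv : Tcomp f v by rewrite /Tcomp vt; move: tT; rewrite inE.
exists v => //; split=> //.
have -> : desc (@Tcomp A f k) v = (fun b => inGW_from f (val t) (flatten (map val b))).
  by apply: funext => b; rewrite desc_Tcomp Tv vt.
exact: infinitely_tall_has_subtree.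
Qed.

End Words.

Section Probability.
Variables (R : realType) (d : measure_display) (Omega : measurableType d)
  (P : probability Omega R).
Implicit Types E F : set Omega.

Lemma PrE E : measurable E -> P E = (Pr P E)%:E.
Proof. by move=> mE; rewrite /Pr fineK // fin_num_measure. Qed.

Lemma Pr_ge0 E : 0 <= Pr P E.
Proof. exact/fine_ge0/measure_ge0. Qed.

Lemma Pr_le1 E : measurable E -> Pr P E <= 1.
Proof. by move=> mE; rewrite -lee_fin -PrE //; apply: probability_le1. Qed.

Lemma Pr_set0 : Pr P set0 = 0.
Proof. by rewrite /Pr measure0. Qed.

Lemma Pr_setT : Pr P setT = 1.
Proof. by rewrite /Pr probability_setT. Qed.

Lemma le_Pr E F : measurable E -> measurable F -> E `<=` F -> Pr P E <= Pr P F.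
Proof. by move=> mE mF EF; rewrite -lee_fin -!PrE //; apply: le_measure; rewrite ?inE. Qed.

Lemma PrU E F : measurable E -> measurable F -> E `&` F = set0 ->
  Pr P (E `|` F) = Pr P E + Pr P F.
Proof.
move=> mE mF EF; apply: EFin_inj; rewrite EFinD -!PrE //; last exact: measurableU.
exact: measureU.
Qed.

Lemma Pr_setC E : measurable E -> Pr P (~` E) = 1 - Pr P E.
Proof.
move=> mE; apply: EFin_inj; rewrite EFinB -!PrE //; last exact: measurableC.
exact: probability_setC.
Qed.

Lemma Pr_bigcup_cvg (F : nat -> set Omega) : (forall n, measurable (F n)) ->
  {homo F : n m / (n <= m)%N >-> n `<=` m} ->
  (fun n => Pr P (F n)) @ \oo --> Pr P (\bigcup_n F n).
Proof.
move=> mF F_homo; have mUF : measurable (\bigcup_n F n) by apply: bigcup_measurable.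
apply: (fine_cvg (f := fun n => P (F n))); rewrite -PrE //.
by apply: nondecreasing_cvg_mu => // n m nm; apply/asboolP/F_homo.
Qed.

Variables (V : finType) (Z : Omega -> V).
Hypothesis mZ : forall v, measurable [set w | Z w = v].

Lemma measurable_preimage_pred (Q : pred V) : measurable [set w | Q (Z w)].
Proof.
have -> : [set w | Q (Z w)] = \big[setU/set0]_(v <- enum V | Q v) [set w | Z w = v].
  apply/seteqP; split=> [w Qw|w].
    by rewrite -bigcup_seq_cond; exists (Z w); rewrite //= mem_enum.
  by rewrite -bigcup_seq_cond => -[v /andP[_ Qv] /= Zv]; rewrite Zv.
by apply: bigsetU_measurable.
Qed.

Lemma Pr_partition E : measurable E ->
  Pr P E = \sum_(v : V) Pr P (E `&` [set w | Z w = v]).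
Proof.
move=> mE; rewrite -big_enum /=.
suff Pr_seq r : uniq r ->
    Pr P (E `&` [set w | Z w \in r]) = \sum_(v <- r) Pr P (E `&` [set w | Z w = v]).
  rewrite -Pr_seq ?enum_uniq //; congr Pr.
  by apply/seteqP; split=> [w Ew|w []//]; split; rewrite //= mem_enum.
elim: r => [_|v r IH /andP[vr ur]]; rewrite ?big_nil ?big_cons.
  by rewrite -Pr_set0; congr Pr; apply/seteqP; split=> w // [].
rewrite -IH // -PrU; first (congr Pr; apply/seteqP; split=> w /=).
- by case=> Ew; rewrite inE => /predU1P[|]; [left|right].
- by case=> -[Ew Zw]; split; rewrite // inE Zw ?eqxx ?orbT.
- exact: measurableI.
- by apply: measurableI => //; apply: (measurable_preimage_pred (mem r)).
- by apply/seteqP; split=> w // [[_ /= Zv] [_ /=]]; rewrite Zv (negbTE vr).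
Qed.

End Probability.

Section Independence.
Variables (R : realType) (d : measure_display) (Omega : measurableType d)
  (P : probability Omega R) (A : finType) (W : seq A -> Omega -> {set A}).
Hypothesis Wmeas : forall (a : seq A) (X : {set A}), measurable [set w | W a w = X].
Hypothesis Wid : forall (a : seq A) (X : {set A}),
  P [set w | W a w = X] = P [set w | W [::] w = X].
Hypothesis Windep : forall (s : seq (seq A)) (Xs : seq A -> {set A}), uniq s ->
  Pr P [set w | all (fun a => W a w == Xs a) s] = \prod_(a <- s) Pr P [set w | W a w = Xs a].

Implicit Types (S : seq (seq A)) (Phi Psi : (seq A -> {set A}) -> bool).

Definition offspring_law (X : {set A}) : R := Pr P [set w | W [::] w = X].

Definition event Phi : set Omega := [set w | Phi (W^~ w)].

Definition determined_by Phi S := forall f g, {in S, f =1 g} -> Phi f = Phi g.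

Definition cylinder S (Xs : seq A -> {set A}) : set Omega :=
  [set w | all (fun a => W a w == Xs a) S].

Definition lookup S (x : seq {set A}) (a : seq A) : {set A} := nth finset.set0 x (index a S).

Definition restrict S w : (size S).-tuple {set A} := map_tuple (W^~ w) (in_tuple S).

Lemma eq_event Phi Psi : Phi =1 Psi -> event Phi = event Psi.
Proof. by move=> PhiPsi; apply/seteqP; split=> w; rewrite /event /= PhiPsi. Qed.

Lemma eventC Phi : event (fun f => ~~ Phi f) = ~` event Phi.
Proof. by apply/seteqP; split=> w /negP. Qed.

Lemma cylinderP S Xs w : cylinder S Xs w <-> {in S, W^~ w =1 Xs}.
Proof.
by rewrite /cylinder /=; split=> [/allP eqS a /eqS/eqP|eqS]; last apply/allP => a /eqS ->.
Qed.

Lemma measurable_cylinder S Xs : measurable (cylinder S Xs).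
Proof.
elim: S => [|a S IH]; first by rewrite [cylinder _ _](_ : _ = setT) //; apply/seteqP.
rewrite [cylinder _ _](_ : _ = [set w | W a w = Xs a] `&` cylinder S Xs).
  exact: measurableI.
by apply/seteqP; split=> w; rewrite /cylinder /=; [case/andP => /eqP|case=> -> ->]; rewrite ?eqxx.
Qed.

Lemma Pr_cylinder S Xs : uniq S -> Pr P (cylinder S Xs) = \prod_(a <- S) offspring_law (Xs a).
Proof. by move=> uS; rewrite Windep //; apply: eq_bigr => a _; rewrite /Pr Wid. Qed.

Lemma lookup_restrict S w : {in S, lookup S (restrict S w) =1 W^~ w}.
Proof. by move=> a aS; rewrite /lookup (nth_map [::]) ?index_mem // nth_index. Qed.

Lemma restrictE S (x : (size S).-tuple {set A}) : uniq S ->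
  [set w | restrict S w = x] = cylinder S (lookup S x).
Proof.
move=> uS; apply/seteqP; split=> w /= => [<-|/cylinderP eqS].
  by apply/cylinderP => a aS; rewrite lookup_restrict.
apply/val_inj/(@eq_from_nth _ finset.set0) => [|i]; rewrite size_map.
  by rewrite (size_tuple x).
by move=> iS; rewrite (nth_map [::]) // eqS ?mem_nth // /lookup index_uniq.
Qed.

Lemma measurable_restrict S : uniq S -> forall x, measurable [set w | restrict S w = x].
Proof. by move=> uS x; rewrite restrictE //; apply: measurable_cylinder. Qed.

Lemma measurable_event S Phi : uniq S -> determined_by Phi S -> measurable (event Phi).
Proof.
move=> uS dPhi; have -> : event Phi = [set w | Phi (lookup S (restrict S w))].
  by apply/seteqP; split=> w /=; rewrite (dPhi _ _ (lookup_restrict w)).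
exact: measurable_preimage_pred (measurable_restrict uS) (fun x => Phi (lookup S x)).
Qed.

Lemma Pr_eventI S Phi (H : set Omega) : uniq S -> determined_by Phi S -> measurable H ->
  Pr P (event Phi `&` H) =
  \sum_(x : (size S).-tuple {set A}) (Phi (lookup S x))%:R * Pr P (cylinder S (lookup S x) `&` H).
Proof.
move=> uS dPhi mH.
rewrite (Pr_partition P (measurable_restrict uS)).
  2: exact/measurableI/mH/(measurable_event uS dPhi).
apply: eq_bigr => x _; rewrite restrictE //.
have PhiE w : cylinder S (lookup S x) w -> Phi (W^~ w) = Phi (lookup S x).
  by move/cylinderP; apply: dPhi.
case: (boolP (Phi _)) => PhiX; rewrite ?mul1r ?mul0r.
  congr Pr; apply/seteqP; split=> w /= => [[[_ Hw] cw]|[cw Hw]] //.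
  by split=> //; rewrite /event /= PhiE.
rewrite -(Pr_set0 P); congr Pr; apply/seteqP; split=> w //= [[Phiw _] cw].
by move: Phiw; rewrite /event /= PhiE // (negbTE PhiX).
Qed.

Lemma Pr_event S Phi : uniq S -> determined_by Phi S ->
  Pr P (event Phi) = \sum_(x : (size S).-tuple {set A})
    (Phi (lookup S x))%:R * \prod_(a <- S) offspring_law (lookup S x a).
Proof.
move=> uS dPhi; rewrite -[event Phi]setIT (Pr_eventI uS dPhi) //.
by apply: eq_bigr => x _; rewrite setIT Pr_cylinder.
Qed.

Lemma catl_inj (a : seq A) : injective (cat a).
Proof. by move=> x y /(congr1 (drop (size a))); rewrite !drop_size_cat. Qed.

Lemma Pr_event_catl S Phi a : uniq S -> determined_by Phi S ->
  Pr P (event (fun f => Phi (fun c => f (a ++ c)))) = Pr P (event Phi).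
Proof.
move=> uS dPhi.
have uaS : uniq (map (cat a) S) by rewrite map_inj_uniq //; apply: catl_inj.
have daPhi : determined_by (fun f => Phi (fun c => f (a ++ c))) (map (cat a) S).
  by move=> f g fg; apply: dPhi => c cS; apply/fg/map_f.
rewrite (Pr_event uaS daPhi) (Pr_event uS dPhi) size_map.
apply: eq_bigr => x _; rewrite big_map.
have lookupE c : lookup (map (cat a) S) x (a ++ c) = lookup S x c.
  by rewrite /lookup index_map //; apply: catl_inj.
congr (_%:R * _); last by apply: eq_bigr => c _; rewrite lookupE.
by congr Phi; apply: funext => c; rewrite lookupE.
Qed.

Lemma Pr_event_andb S S' Phi Psi : uniq S -> uniq S' -> {in S, forall a, a \notin S'} ->
  determined_by Phi S -> determined_by Psi S' ->
  Pr P (event (fun f => Phi f && Psi f)) = Pr P (event Phi) * Pr P (event Psi).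
Proof.
move=> uS uS' SS' dPhi dPsi.
have S'S a : a \in S' -> (a \in S) = false by move=> aS'; apply/negbTE/(contraTN (SS' a)).
have -> : event (fun f => Phi f && Psi f) = event Phi `&` event Psi.
  by apply/seteqP; split=> w /=; rewrite /event /= => /andP.
rewrite (Pr_eventI uS dPhi (measurable_event uS' dPsi)) (Pr_event uS dPhi) big_distrl /=.
apply: eq_bigr => x _; rewrite -mulrA; congr (_ * _).
rewrite setIC (Pr_eventI uS' dPsi (measurable_cylinder _ _)) (Pr_event uS' dPsi) big_distrr /=.
apply: eq_bigr => y _; rewrite mulrCA; congr (_ * _).
pose xy a := if a \in S then lookup S x a else lookup S' y a.
have -> : cylinder S' (lookup S' y) `&` cylinder S (lookup S x) = cylinder (S ++ S') xy.
  apply/seteqP; split=> w.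
    case=> /cylinderP wy /cylinderP wx; apply/cylinderP => a; rewrite mem_cat /xy.
    by case/orP=> [aS|aS']; [rewrite aS; apply: wx|rewrite S'S //; apply: wy].
  move/cylinderP=> wxy; split; apply/cylinderP => a aS; have := wxy a;
    rewrite mem_cat aS ?orbT /xy => ->//; first by rewrite S'S.
  by rewrite aS.
rewrite Pr_cylinder; last by rewrite cat_uniq uS uS' andbT; apply/hasPn => a /S'S ->.
rewrite big_cat /=; congr (_ * _); apply: eq_big_seq => a aS; rewrite /xy.
  by rewrite aS.
by rewrite S'S.
Qed.

Lemma Pr_event_all (I : eqType) (r : seq I) (Phi : I -> (seq A -> {set A}) -> bool)
    (S : I -> seq (seq A)) :
  uniq r -> (forall i, uniq (S i)) -> (forall i, determined_by (Phi i) (S i)) ->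
  {in r &, forall i j, i != j -> {in S i, forall a, a \notin S j}} ->
  Pr P (event (fun f => all (Phi^~ f) r)) = \prod_(i <- r) Pr P (event (Phi i)).
Proof.
elim: r => [|i r IH] /= => [_ _ _ _|/andP[ir ur] uS dPhi disj].
  by rewrite big_nil -(Pr_setT P); congr Pr; apply/seteqP.
have Sr : uniq (undup (flatten (map S r))) := undup_uniq _.
rewrite big_cons -IH //; last by move=> j l jr lr; apply: disj; rewrite inE ?jr ?lr orbT.
apply: (Pr_event_andb (uS i) Sr) => //.
  move=> a ai; rewrite mem_undup; apply/flattenP => -[_ /mapP[j jr ->]].
  have ij : i != j by apply: contraNneq ir => ->.
  by apply/negP; apply: (disj i j) ai; rewrite ?mem_head ?inE ?jr ?orbT.
move=> f g fg; apply: eq_in_all => j jr; apply: (dPhi j) => a aj; apply: fg.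
by rewrite mem_undup; apply/flattenP; exists (S j); rewrite ?map_f.
Qed.

End Independence.

Section RandomSubsets.
Variables (R : realType) (T : finType).
Implicit Types (sg tau : T -> R) (phi : {set T} -> R) (u : T) (D : {set T}).

(* [wsum sg phi] is the mean of [phi Y] for a random set [Y] containing each [t]
   independently with probability [1 - sg t]; [weight sg D] is the probability
   that [Y = D]. *)
Definition coin sg D t : R := if t \in D then 1 - sg t else sg t.

Definition weight sg D : R := \prod_t coin sg D t.

Definition wsum sg phi : R := \sum_(D : {set T}) weight sg D * phi D.

Definition in01 sg := forall t, 0 <= sg t <= 1.

Lemma coin_ge0 sg D t : in01 sg -> 0 <= coin sg D t.
Proof. by move/(_ t)/andP=> [sg0 sg1]; rewrite /coin; case: ifP; rewrite ?subr_ge0. Qed.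

Lemma weight_ge0 sg D : in01 sg -> 0 <= weight sg D.
Proof. by move=> sg01; apply: prodr_ge0 => t _; apply: coin_ge0. Qed.

Lemma sum_weight sg : \sum_(D : {set T}) weight sg D = 1.
Proof.
have ffun_set : bijective (fun f : {ffun T -> bool} => [set t | f t]%SET).
  exists (fun D : {set T} => [ffun t => t \in D]) => [f|D].
    by apply/ffunP => t; rewrite ffunE inE.
  by apply/setP => t; rewrite inE ffunE.
rewrite (reindex _ (onW_bij _ ffun_set)) /=.
rewrite /weight /coin; under eq_bigr do under eq_bigr do rewrite inE.
rewrite -(bigA_distr_bigA (fun t b => if b then 1 - sg t else sg t)) /=.
by rewrite big1 // => t _; rewrite big_bool /= subrK.
Qed.

Lemma weight_const (s : R) D : weight (fun _ => s) D = (1 - s) ^+ #|D| * s ^+ #|~: D|.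
Proof.
rewrite /weight /coin (bigID (mem D)) /= -!prodr_const; congr (_ * _).
  by apply: eq_big => // t ->.
by apply: eq_big => [t|t /negbTE ->]; rewrite ?inE.
Qed.

Lemma wsum_setU1 sg u phi : wsum sg phi = \sum_(D : {set T} | u \notin D)
  \prod_(t | t != u) coin sg D t * (phi (u |: D) + sg u * (phi D - phi (u |: D))).
Proof.
rewrite /wsum (bigID (fun D => u \in D)) /=.
rewrite (reindex_onto (fun D => u |: D) (fun D => D :\ u)) /=.
  2: by move=> D uD; rewrite finset.setD1K.
rewrite (eq_bigl (fun D => u \notin D)) => [|D]; last first.
  rewrite in_setU1 eqxx /=; apply/eqP/idP => [<-|uD]; first by rewrite in_setD1 eqxx.
  by rewrite finset.setU1K.
have weightD1 D : weight sg D = coin sg D u * \prod_(t | t != u) coin sg D t.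
  by rewrite /weight (bigD1 u).
rewrite -big_split /=; apply: eq_bigr => D uD; rewrite !weightD1.
have -> : \prod_(t | t != u) coin sg (u |: D) t = \prod_(t | t != u) coin sg D t.
  by apply: eq_bigr => t tu; rewrite /coin in_setU1 (negbTE tu).
by rewrite /coin in_setU1 eqxx (negbTE uD) /=; ring.
Qed.

Lemma wsum_le_setU1 sg tau u phi : in01 sg ->
  (forall t, t != u -> sg t = tau t) -> sg u <= tau u ->
  {homo phi : D D' / D \subset D' >-> D >= D'} -> wsum sg phi <= wsum tau phi.
Proof.
move=> sg01 sg_tau sg_tau_u phi_anti; rewrite !(wsum_setU1 _ u).
apply: ler_sum => D uD.
have -> : \prod_(t | t != u) coin tau D t = \prod_(t | t != u) coin sg D t.
  by apply: eq_bigr => t tu; rewrite /coin sg_tau.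
apply: ler_wpM2l; first by apply: prodr_ge0 => t _; apply: coin_ge0.
rewrite lerD2l ler_wpM2r // subr_ge0; apply: phi_anti; exact: finset.subsetUr.
Qed.

Lemma wsum_le sg tau phi : in01 sg -> in01 tau -> (forall t, sg t <= tau t) ->
  {homo phi : D D' / D \subset D' >-> D >= D'} -> wsum sg phi <= wsum tau phi.
Proof.
move=> sg01 tau01 sg_tau phi_anti.
pose mix (r : seq T) t := if t \in r then tau t else sg t.
suff mixP r : wsum sg phi <= wsum (mix r) phi.
  by rewrite (_ : tau = mix (enum T)) //; apply: funext => t; rewrite /mix mem_enum.
elim: r => [|u r IH]; first by rewrite (_ : mix [::] = sg).
apply: le_trans IH (wsum_le_setU1 (u := u) _ _ _ phi_anti) => [t|t tu|].
- by rewrite /mix; case: ifP.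
- by rewrite /mix inE (negbTE tu).
- by rewrite /mix mem_head; case: ifP.
Qed.
End RandomSubsets.

Section GaltonWatson.
Variables (R : realType) (d : measure_display) (Omega : measurableType d)
  (P : probability Omega R) (A : finType) (W : seq A -> Omega -> {set A}).
Hypothesis Wmeas : forall (a : seq A) (X : {set A}), measurable [set w | W a w = X].
Hypothesis Wid : forall (a : seq A) (X : {set A}),
  P [set w | W a w = X] = P [set w | W [::] w = X].
Hypothesis Windep : forall (s : seq (seq A)) (Xs : seq A -> {set A}), uniq s ->
  Pr P [set w | all (fun a => W a w == Xs a) s] = \prod_(a <- s) Pr P [set w | W a w = Xs a].

Local Notation event := (event W).
Local Notation Pr := (Pr P).
Implicit Types (f g : seq A -> {set A}) (Phi : (seq A -> {set A}) -> bool).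

Definition determined_below (V : Type) (Phi : (seq A -> {set A}) -> V) N :=
  forall f g, (forall c, (size c < N)%N -> f c = g c) -> Phi f = Phi g.

Lemma determined_below_short Phi N :
  determined_below Phi N -> determined_by Phi (short_words N).
Proof. by move=> dPhi f g fg; apply: dPhi => c cN; apply: fg; rewrite mem_short_words. Qed.

Lemma measurable_event_below Phi N : determined_below Phi N -> measurable (event Phi).
Proof.
by move/determined_below_short; exact: (measurable_event Wmeas (short_words_uniq N)).
Qed.

Lemma measurable_event_pred (V : Type) (Z : (seq A -> {set A}) -> V) (Q : V -> bool) N :
  determined_below Z N -> measurable (event (fun f => Q (Z f))).
Proof. by move=> dZ; apply: (measurable_event_below (N := N)) => f g /dZ ->. Qed.

Lemma Pr_event_pred (V : finType) (Z : (seq A -> {set A}) -> V) (Q : pred V) N :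
  determined_below Z N ->
  Pr (event (fun f => Q (Z f))) = \sum_(v : V) (Q v)%:R * Pr (event (fun f => Z f == v)).
Proof.
move=> dZ; have mZ v : measurable [set w | Z (W^~ w) = v].
  rewrite (_ : [set w | _] = event (fun f => Z f == v)); last first.
    by apply/seteqP; split=> w /eqP.
  exact: (measurable_event_pred (fun z => z == v) dZ).
rewrite (Pr_partition P mZ); last exact: (measurable_event_pred Q dZ).
apply: eq_bigr => v _; case: (boolP (Q v)) => Qv; rewrite ?mul1r ?mul0r.
  congr Pr; apply/seteqP; split=> w; rewrite /event /=; first by case=> _ /eqP.
  by move/eqP=> ->.
rewrite -(Pr_set0 P); congr Pr; apply/seteqP; split=> w //= [+ Zw].
by rewrite /event /= Zw (negbTE Qv).
Qed.

Lemma Tgen_below l : determined_below (fun f => Tgen f l) l.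
Proof.
move=> f g fg; apply/setP => t; rewrite !inE.
by apply: eq_inGW_from => c; rewrite size_tuple => /fg.
Qed.

Lemma measurable_Tgen_pred l (Q : pred {set l.-tuple A}) :
  measurable (event (fun f => Q (Tgen f l))).
Proof. exact: (measurable_event_pred Q (@Tgen_below l)). Qed.

(* [E[s ^ #|T_l|]]: a random set missing each vertex with probability [s] avoids
   [T_l] with probability [s ^ #|T_l|]. *)
Definition Tgen_pgf l (s : R) : R := wsum (fun _ => s)
  (fun D : {set l.-tuple A} => Pr (event (fun f => Tgen f l :&: D == finset.set0))).

Lemma wsum_Tgen_nonempty l s :
  wsum (fun _ => s) (fun D : {set l.-tuple A} =>
    Pr (event (fun f => (Tgen f l != finset.set0) && (Tgen f l :&: D == finset.set0)))) =
  Tgen_pgf l s - Pr (event (fun f => Tgen f l == finset.set0)).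
Proof.
rewrite /Tgen_pgf /wsum -[X in _ - X]mul1r -(sum_weight (T := l.-tuple A) (fun _ => s)).
rewrite big_distrl -sumrB /=.
apply: eq_bigr => D _; rewrite -mulrBr; congr (_ * _).
have -> : event (fun f => Tgen f l :&: D == finset.set0) =
    event (fun f => (Tgen f l != finset.set0) && (Tgen f l :&: D == finset.set0)) `|`
    event (fun f => Tgen f l == finset.set0).
  apply/seteqP; split=> w; rewrite /event /=; last first.
    by case=> [/andP[_ ->]|/eqP ->] //; rewrite finset.set0I.
  move=> TD; have [T0|T0] := eqVneq (Tgen (W^~ w) l) finset.set0.
    by right; apply/eqP.
  by left; apply/andP.
rewrite (PrU P (measurable_Tgen_pred (fun T => (T != finset.set0) && (T :&: D == finset.set0)))
  (measurable_Tgen_pred (fun T => T == finset.set0))) ?addrK //.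
by apply/seteqP; split=> w //= [/andP[/negP + _]].
Qed.

Lemma Tgen_pgf_le_gfun l (Bl : {set {set l.-tuple A}}) s :
  (forall X, X \in Bl -> X != finset.set0) -> 0 <= s <= 1 -> Tgen_pgf l s <= gfun P W Bl s.
Proof.
move=> Bl0 s01; apply: ler_sum => D _; rewrite weight_const; apply: ler_wpM2l.
  by rewrite -weight_const; apply: weight_ge0.
apply: le_Pr.
- exact: (measurable_Tgen_pred (fun T => T :&: D == finset.set0)).
- exact: (measurable_Tgen_pred (fun T => ~~ upclosure_mem Bl (T :&: D))).
move=> w /eqP TD; apply/exists_inP => -[X /Bl0 X0].
by rewrite TD finset.subset0; apply/negP.
Qed.

Section Heights.
Variables (k : nat) (Ak : {set {set k.-tuple A}}).

Lemma tall_below n a : determined_below (fun f => tall Ak f n a) (size a + n * k).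
Proof. by move=> f g fg; apply: eq_tall => c ck; apply: fg; rewrite size_cat ltn_add2l. Qed.

Definition short_prob n : R := Pr (event (fun f => ~~ tall Ak f n [::])).

Lemma short_prob0 : short_prob 0 = 0.
Proof. by rewrite -(Pr_set0 P); congr Pr; apply/seteqP; split=> w. Qed.

Lemma short_prob_le1 n : short_prob n <= 1.
Proof. exact: (Pr_le1 P (measurable_event_pred negb (@tall_below n [::]))). Qed.

Lemma Pr_tall n a (b : bool) :
  Pr (event (fun f => tall Ak f n a == b)) = if b then 1 - short_prob n else short_prob n.
Proof.
have dtall := @tall_below n [::].
have -> : event (fun f => tall Ak f n a == b) =
    event (fun f => tall Ak (fun c => f (a ++ c)) n [::] == b).
  by apply: eq_event => f; rewrite tall_catl.
rewrite (Pr_event_catl Wmeas Wid Windep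
  (Phi := fun f => tall Ak f n [::] == b) _ (short_words_uniq (n * k))); last first.
  by apply: determined_below_short => f g /dtall ->.
case: b; last by congr Pr; apply: eq_event => f; rewrite eqbF_neg.
rewrite -Pr_setC -?eventC; last exact: (measurable_event_pred negb dtall).
by congr Pr; apply: eq_event => f; rewrite eqb_id negbK.
Qed.

Definition tall_set l f n : {set l.-tuple A} := [set t : l.-tuple A | tall Ak f n (val t)].

Lemma tall_set_below l n : determined_below (fun f => tall_set l f n) (l + n * k).
Proof.
by move=> f g fg; apply/setP => t; rewrite !inE (@tall_below n (val t) f g) // size_tuple.
Qed.

Lemma Pr_tall_set l n (D : {set l.-tuple A}) :
  Pr (event (fun f => tall_set l f n == D)) = weight (fun _ => short_prob n) D.
Proof.
have -> : event (fun f => tall_set l f n == D) = event (fun f =>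
    all (fun t => tall Ak f n (val t) == (t \in D)) (index_enum (l.-tuple A))).
  apply: eq_event => f; apply/eqP/allP => [<- t _|tD]; first by rewrite inE.
  by apply/setP => t; rewrite inE; apply/eqP/tD; rewrite mem_index_enum.
rewrite (Pr_event_all Wmeas Wid Windep (Phi := fun t f => tall Ak f n (val t) == (t \in D))
  (S := fun t : l.-tuple A => map (cat (val t)) (short_words (n * k)))).
- by apply: eq_bigr => t _; rewrite Pr_tall.
- exact: index_enum_uniq.
- by move=> t; rewrite map_inj_uniq ?short_words_uniq //; apply: catl_inj.
- move=> t f g fg; congr (_ == _); apply: eq_tall => c ck.
  by apply/fg/map_f; rewrite mem_short_words.
- move=> t t' _ _ tt' a /mapP[c _ ->]; apply/mapP => -[c' _] /eqP.
  by rewrite eqseq_cat ?size_tuple // => /andP[/eqP/val_inj tt'E]; rewrite tt'E eqxx in tt'.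
Qed.

Lemma Tgen_tall_set_below l n :
  determined_below (fun f => (Tgen f l, tall_set l f n)) (l + n * k).
Proof.
move=> f g fg; congr pair; last exact: tall_set_below.
by apply: Tgen_below => c cl; apply: fg; apply: leq_trans cl (leq_addr _ _).
Qed.

(* The vertices of generation [l] with a subtree of height [n] are determined by
   the offspring sets strictly below generation [l], hence independent of [T_l]. *)
Lemma Pr_Tgen_tall_set l n (Psi : {set l.-tuple A} -> {set l.-tuple A} -> bool) :
  Pr (event (fun f => Psi (Tgen f l) (tall_set l f n))) =
  wsum (fun _ => short_prob n) (fun D => Pr (event (fun f => Psi (Tgen f l) D))).
Proof.
rewrite (Pr_event_pred (fun p => Psi p.1 p.2) (@Tgen_tall_set_below l n)).
rewrite -(pair_bigA _ (fun T D => (Psi T D)%:R *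
  Pr (event (fun f => (Tgen f l, tall_set l f n) == (T, D))))) /= exchange_big /=.
apply: eq_bigr => D _; rewrite (Pr_event_pred (fun T => Psi T D) (@Tgen_below l)) big_distrr /=.
apply: eq_bigr => T _; rewrite mulrCA; congr (_ * _).
have -> : event (fun f => (Tgen f l, tall_set l f n) == (T, D)) =
    event (fun f => (Tgen f l == T) && (tall_set l f n == D)).
  by apply: eq_event => f; rewrite xpair_eqE.
pose deep := undup (flatten
  [seq map (cat (val t)) (short_words (n * k)) | t <- index_enum (l.-tuple A)]).
rewrite (Pr_event_andb Wmeas Wid Windep (S := short_words l) (S' := deep)).
- by rewrite Pr_tall_set mulrC.
- exact: short_words_uniq.
- exact: undup_uniq.
- move=> a; rewrite mem_short_words mem_undup => al.
  apply/flattenP => -[_ /mapP[t _ ->] /mapP[c _ ac]].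
  by move: al; rewrite ac size_cat size_tuple ltnNge leq_addr.
- by apply: determined_below_short => f g /Tgen_below ->.
- move=> f g fg; congr (_ == D); apply/setP => t; rewrite !inE; apply: eq_tall => c ck.
  apply: fg; rewrite mem_undup; apply/flattenP.
  exists (map (cat (val t)) (short_words (n * k))); apply: map_f.
    exact: mem_index_enum.
  by rewrite mem_short_words.
Qed.

Lemma tall_succ f n : tall Ak f n.+1 [::] = upclosure_mem Ak (Tgen f k :&: tall_set k f n).
Proof.
apply: eq_existsb => X; congr (_ && _).
by apply/forall_inP/fintype.subsetP => tX t /tX; rewrite !inE.
Qed.

Lemma gfunE s : gfun P W Ak s =
  wsum (fun _ => s) (fun D => Pr (event (fun f => ~~ upclosure_mem Ak (Tgen f k :&: D)))).
Proof. by apply: eq_bigr => D _; rewrite weight_const. Qed.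

Lemma short_prob_succ n : short_prob n.+1 = gfun P W Ak (short_prob n).
Proof.
rewrite gfunE -(Pr_Tgen_tall_set n (fun T D => ~~ upclosure_mem Ak (T :&: D))).
by congr Pr; apply: eq_event => f; rewrite tall_succ.
Qed.

Lemma gfun_le x y : 0 <= x -> x <= y -> y <= 1 -> gfun P W Ak x <= gfun P W Ak y.
Proof.
move=> x0 xy y1; rewrite !gfunE; apply: wsum_le => [t|t|t|D D' DD'] //.
- by rewrite x0 (le_trans xy y1).
- by rewrite (le_trans x0 xy) y1.
apply: le_Pr.
- exact: (measurable_Tgen_pred (fun T => ~~ upclosure_mem Ak (T :&: D'))).
- exact: (measurable_Tgen_pred (fun T => ~~ upclosure_mem Ak (T :&: D))).
by move=> w; apply/contra/upclosure_memS/finset.setIS.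
Qed.

Lemma short_prob_le s : 0 <= s <= 1 -> gfun P W Ak s <= s -> forall n, short_prob n <= s.
Proof.
case/andP=> s0 s1 gs; elim=> [|n IH]; first by rewrite short_prob0.
by rewrite short_prob_succ; apply: le_trans gs; apply: gfun_le => //; apply: Pr_ge0.
Qed.

Definition stuck l n f :=
  (Tgen f l != finset.set0) && (Tgen f l :&: tall_set l f n == finset.set0).

Lemma stuck_le l n m f : (n <= m)%N -> stuck l n f -> stuck l m f.
Proof.
move=> nm; rewrite /stuck => /andP[-> /eqP T0] /=; rewrite -finset.subset0 -T0.
by apply/finset.setIS/fintype.subsetP => t; rewrite !inE; apply: tall_le.
Qed.

Lemma stuck_of_size_bound f m L : ~ extinct f ->
  (forall v : seq (k.-tuple A),
    Tcomp f v /\ has_subtree Ak (desc (@Tcomp A f k) v) -> (size v < m)%N) ->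
  (m <= L)%N -> exists n, stuck (k * L) n f.
Proof.
move=> nf bound mL.
have T0 : Tgen f (k * L) != finset.set0.
  by apply: contra_notN nf => T0; apply/extinctE; exists (k * L)%N.
have [n nT] : exists n, forall t, t \in enum (Tgen f (k * L)) -> ~~ tall Ak f n (val t).
  apply: ex_monotone_all_seq => [n n' t nn'|t]; first by apply/contra/tall_le.
  rewrite mem_enum => tT; apply: contrapT => /forallNP tall_t.
  have {}tall_t n : tall Ak f n (val t) by apply/negPn/negP/tall_t.
  have [v vL /bound] := infinitely_tall_vertex tT tall_t.
  by rewrite vL ltnNge mL.
exists n; rewrite /stuck T0 /=; apply/eqP/setP => t.
rewrite finset.in_setI finset.in_set0 [t \in tall_set _ _ _]inE.
by apply/negP => /andP[tT]; apply/negP/nT; rewrite mem_enum.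
Qed.

Lemma measurable_stuck l n : measurable (event (stuck l n)).
Proof.
exact: (measurable_event_pred (fun p => (p.1 != finset.set0) && (p.1 :&: p.2 == finset.set0))
  (@Tgen_tall_set_below l n)).
Qed.

Lemma Pr_stuck_le l n s : 0 <= s <= 1 -> short_prob n <= s ->
  Pr (event (stuck l n)) <= Tgen_pgf l s - Pr (event (fun f => Tgen f l == finset.set0)).
Proof.
case/andP=> s0 s1 xs; rewrite -wsum_Tgen_nonempty.
have -> : Pr (event (stuck l n)) = wsum (fun _ => short_prob n) (fun D =>
    Pr (event (fun f => (Tgen f l != finset.set0) && (Tgen f l :&: D == finset.set0)))).
  exact: (Pr_Tgen_tall_set n (fun T D => (T != finset.set0) && (T :&: D == finset.set0))).
apply: wsum_le => [t|t|t|D D' DD'].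
- by rewrite Pr_ge0 short_prob_le1.
- by rewrite s0 s1.
- exact: xs.
apply: le_Pr.
- exact: (measurable_Tgen_pred (fun T => (T != finset.set0) && (T :&: D' == finset.set0))).
- exact: (measurable_Tgen_pred (fun T => (T != finset.set0) && (T :&: D == finset.set0))).
move=> w; rewrite /event /= => /andP[-> /eqP TD'] /=; rewrite -finset.subset0 -TD'.
exact: finset.setIS.
Qed.

End Heights.

Lemma extinction_bigcup :
  [set w | extinct (W^~ w)] = \bigcup_n event (fun f => Tgen f n == finset.set0).
Proof.
apply/seteqP; split=> w; first by case/extinctE=> n Tn; exists n.
by case=> n _ Tn; apply/extinctE; exists n.
Qed.

Lemma measurable_extinction : measurable [set w | extinct (W^~ w)].
Proof.
rewrite extinction_bigcup; apply: bigcup_measurable => n _.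
exact: (measurable_Tgen_pred (fun T => T == finset.set0)).
Qed.

Lemma Pr_Tgen_eq0_cvg :
  (fun n => Pr (event (fun f => Tgen f n == finset.set0))) @ \oo --> Pr [set w | extinct (W^~ w)].
Proof.
rewrite extinction_bigcup; apply: Pr_bigcup_cvg => [n|n m nm w]; last exact: Tgen_eq0_le.
exact: (measurable_Tgen_pred (fun T => T == finset.set0)).
Qed.

Lemma Pr_stuck_ever_le k (Ak : {set {set k.-tuple A}}) l (Bl : {set {set l.-tuple A}}) s :
  (forall X, X \in Bl -> X != finset.set0) -> 0 <= s <= 1 -> gfun P W Ak s <= s ->
  Pr (\bigcup_n event (stuck Ak l n)) <=
  gfun P W Bl s - Pr (event (fun f => Tgen f l == finset.set0)).
Proof.
move=> Bl0 s01 gs.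
have := Pr_bigcup_cvg (P := P) (measurable_stuck Ak l) (fun n m nm w => stuck_le nm).
move/cvgr_to_le; apply; apply: nearW => n.
apply: le_trans (Pr_stuck_le l s01 (short_prob_le s01 gs n)) _.
by rewrite lerD2r; apply: Tgen_pgf_le_gfun.
Qed.

Section FixedCompression.
Variables (Acal : forall l : nat, {set {set l.-tuple A}}) (s : R) (k : nat).
Hypothesis Acal0 : forall l (X : {set l.-tuple A}), X \in Acal l -> X != finset.set0.
Hypothesis gfun_cvg : (fun l => gfun P W (Acal l) s) @ \oo --> Pr [set w | extinct (W^~ w)].
Hypothesis s01 : 0 <= s <= 1.
Hypothesis k_gt0 : (0 < k)%N.
Hypothesis gfun_k : gfun P W (Acal k) s <= s.

Definition stuck_from m : set Omega :=
  \bigcap_(L in [set L | (m <= L)%N]) \bigcup_n event (stuck (Acal k) (k * L) n).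

Lemma measurable_stuck_from m : measurable (stuck_from m).
Proof.
apply: bigcap_measurable => [|L _]; first by exists m => /=.
by apply: bigcup_measurable => n _; apply: measurable_stuck.
Qed.

Lemma Pr_stuck_from m : Pr (stuck_from m) = 0.
Proof.
have gap0 : (fun l => gfun P W (Acal l) s - Pr (event (fun f => Tgen f l == finset.set0)))
    @ \oo --> 0.
  by rewrite -(subrr (Pr [set w | extinct (W^~ w)])); apply: cvgB => //; apply: Pr_Tgen_eq0_cvg.
apply/le_anti; rewrite Pr_ge0 andbT; apply/ler_addgt0Pr => e e0; rewrite add0r.
have [M _ gapM] := cvgr_lt _ gap0 _ e0.
have kL : (M <= k * (m + M))%N by rewrite (leq_trans (leq_addl m M)) // leq_pmull.
apply: le_trans (ltW (gapM _ kL)); apply: le_trans (Pr_stuck_ever_le (Acal0 (l := _)) s01 gfun_k).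
apply: le_Pr (measurable_stuck_from m) _ _.
  by apply: bigcup_measurable => n _; apply: measurable_stuck.
by move=> w; apply; rewrite /= leq_addr.
Qed.

Lemma ae_infinitely_many_subtrees :
  {ae P, forall w, ~ extinct (W^~ w) ->
    infinite_set [set v : seq (k.-tuple A) |
      Tcomp (W^~ w) v /\ has_subtree (Acal k) (desc (@Tcomp A (W^~ w) k) v)]}.
Proof.
apply: (negligibleS (A := \bigcup_m stuck_from m)); last first.
  apply: negligible_bigcup => m; exists (stuck_from m); split=> //.
    exact: measurable_stuck_from.
  by have := PrE P (measurable_stuck_from m); rewrite Pr_stuck_from.
move=> w /= /not_implyP[nw /contrapT /finite_set_size_bound[m bound]].
exists m => // L mL; have [n stuck_n] := stuck_of_size_bound nw bound mL.
by exists n.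
Qed.
End FixedCompression.

End GaltonWatson.

Theorem lemma4p4 (R : realType) (d : measure_display) (Omega : measurableType d)
  (P : probability Omega R) (A : finType) (W : seq A -> Omega -> {set A})
  (Acal : forall k : nat, {set {set k.-tuple A}}) :
  (* each W_a is a random subset of A *)
  (forall (a : seq A) (X : {set A}), measurable [set w | W a w = X]) ->
  (* the W_a are identically distributed (copies of W := W_[::]) *)
  (forall (a : seq A) (X : {set A}),
      P [set w | W a w = X] = P [set w | W [::] w = X]) ->
  (* the W_a are mutually independent *)
  (forall (s : seq (seq A)) (Xs : seq A -> {set A}), uniq s ->
      Pr P [set w | all (fun a => W a w == Xs a) s] =
      \prod_(a <- s) Pr P [set w | W a w = Xs a]) ->
  (* P(i \in W) > 0 for every i *)
  (forall i : A, 0 < Pr P [set w | i \in W [::] w]) ->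
  (* supercritical: E|W| > 1 *)
  1 < \sum_(X : {set A}) #|X|%:R * Pr P [set w | W [::] w = X] ->
  (* each A_k is a nonempty collection of nonempty subsets of A^k *)
  (forall k : nat, Acal k != finset.set0) ->
  (forall (k : nat) (X : {set k.-tuple A}), X \in Acal k -> X != finset.set0) ->
  (* g_{A_k}(s) -> P(extinction) for every s in (0,1) *)
  (forall s : R, 0 < s < 1 ->
      (fun k : nat => gfun P W (Acal k) s) @ \oo -->
      Pr P [set w | extinct (fun a => W a w)]) ->
  exists K : nat, forall k : nat, (K < k)%N ->
    {ae P, forall w, ~ extinct (fun a => W a w) ->
       infinite_set [set v : seq (k.-tuple A) |
          @Tcomp A (fun a => W a w) k v /\
          has_subtree (Acal k) (desc (@Tcomp A (fun a => W a w) k) v)]}.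
Proof.
move=> Wmeas Wid Windep _ _ _ Acal0 gfun_cvg.
have mE := measurable_extinction Wmeas.
set q := Pr P [set w | extinct (W^~ w)]; have q_ge0 : 0 <= q := Pr_ge0 P _.
have [q_lt1|q_ge1] := ltP q 1; last first.
  exists 0%N => k _; exists (~` [set w | extinct (W^~ w)]); split; first exact: measurableC.
    have q1 : q = 1 by apply/le_anti; rewrite q_ge1 Pr_le1.
    by have := PrE P (measurableC mE); rewrite (Pr_setC P mE) -/q q1 subrr.
  by move=> w /= noQ ext; apply: noQ => /(_ ext).
pose s := (1 + q) / 2.
have s_gt0 : 0 < s by rewrite divr_gt0 //; lra.
have s_lt1 : s < 1 by rewrite ltr_pdivrMr //; lra.
have q_lt_s : q < s by rewrite ltr_pdivlMr //; lra.
have s01 : 0 <= s <= 1 by rewrite !ltW.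
have s_gt0_lt1 : 0 < s < 1 by rewrite s_gt0 s_lt1.
have [K _ gK] := cvgr_lt _ (gfun_cvg s s_gt0_lt1) _ q_lt_s.
exists K => k Kk.
apply: (ae_infinitely_many_subtrees Wmeas Wid Windep Acal0 (gfun_cvg s s_gt0_lt1) s01).
- exact: leq_ltn_trans Kk.
- exact/ltW/gK/ltnW.
Qed.
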